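(* Let $\mathcal{S}$ be a state space and let $\mathsf{M}^{(1)},\mathsf{M}^{(2)}$ be dichotomic measurements on $\mathcal{S}$ with outcomes $\{+,-\}$. Then $\bar P(\mathsf{M}^{(1)},\mathsf{M}^{(2)})=1$ if and only if there exist four states $s_1,s_2,s_3,s_4\in\mathcal{S}$ such that $\mathsf{M}^{(1)}$ discriminates $\{s_1,s_2\}$ and $\{s_3,s_4\}$ and $\mathsf{M}^{(2)}$ discriminates $\{s_1,s_4\}$ and $\{s_2,s_3\}$.
   Context: General probabilistic theory setting: a state space $\mathcal{S}$ is a compact convex subset of a finite-dimensional real vector space, embedded as a base of a closed generating proper cone in a vector space $V$, with unit effect $u$. Effects are linear functionals $e$ on $V$ with $0\le e\le1$ on $\mathcal{S}$; $\|f\|=\max_{s\in\mathcal{S}}|f(s)|$. A dichotomic measurement is a pair of effects $\mathsf{M}_+,\mathsf{M}_-$ with $\mathsf{M}_++\mathsf{M}_-=u$. For dichotomic $\mathsf{M}^{(1)},\mathsf{M}^{(2)}$, $\bar P(\mathsf{M}^{(1)},\mathsf{M}^{(2)})=\frac18\sum_{x,y\in\{+,-\}}\|\mathsf{M}^{(1)}_x+\mathsf{M}^{(2)}_y\|$. A dichotomic measurement $\mathsf{M}$ discriminates sets of states $S_+,S_-\subseteq\mathcal{S}$ if $\mathsf{M}_+(s)=1$ for all $s\in S_+$ and $\mathsf{M}_+(s)=0$ for all $s\in S_-$. *)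

From HB Require Import structures.
From mathcomp Require Import all_boot all_order all_algebra.
From mathcomp Require Import all_classical all_reals all_analysis.
Set Implicit Arguments. Unset Strict Implicit. Unset Printing Implicit Defensive.
Import Order.TTheory GRing.Theory Num.Theory.
Import numFieldNormedType.Exports.
Local Open Scope classical_set_scope.
Local Open Scope ring_scope.

(* Linear functionals on V are represented by their coefficient row vectors:
   the functional f acts by  ev f v = \sum_i f_i v_i. *)
Definition ev (R : realType) (n : nat) (f v : 'rV[R]_n) : R :=
  \sum_(i < n) f 0 i * v 0 i.

Definition convex_set (R : realType) (n : nat) (S : set 'rV[R]_n) : Prop :=
  forall x y, S x -> S y -> forall t : R, 0 <= t <= 1 -> S (t *: x + (1 - t) *: y).

(* S is a state space with unit effect u: S is a nonempty compact convex set,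
   which is the base (cut out by u = 1) of the cone {t s | t >= 0, s in S};
   this cone is closed and proper (automatic from compactness and u = 1 on S)
   and generating (every vector is a difference of two cone elements). *)
Definition state_space (R : realType) (n : nat) (S : set 'rV[R]_n) (u : 'rV[R]_n) : Prop :=
  [/\ S !=set0, compact S, convex_set S,
      (forall s, S s -> ev u s = 1) &
      (forall v : 'rV[R]_n, exists s1 s2 (t1 t2 : R),
          [/\ S s1, S s2, 0 <= t1, 0 <= t2 & v = t1 *: s1 - t2 *: s2])].

Definition effect (R : realType) (n : nat) (S : set 'rV[R]_n) (e : 'rV[R]_n) : Prop :=
  forall s, S s -> 0 <= ev e s <= 1.

Definition dichotomic (R : realType) (n : nat) (S : set 'rV[R]_n) (u Mp Mm : 'rV[R]_n) : Prop :=
  [/\ effect S Mp, effect S Mm & Mp + Mm = u].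

(* ||f|| = max_{s in S} |f(s)| (the max exists by compactness; written as sup). *)
Definition fnorm (R : realType) (n : nat) (S : set 'rV[R]_n) (f : 'rV[R]_n) : R :=
  sup [set `|ev f s| | s in S].

Definition Pbar (R : realType) (n : nat) (S : set 'rV[R]_n)
  (M1p M1m M2p M2m : 'rV[R]_n) : R :=
  8^-1 * (fnorm S (M1p + M2p) + fnorm S (M1p + M2m)
          + fnorm S (M1m + M2p) + fnorm S (M1m + M2m)).

Definition discriminates (R : realType) (n : nat) (Mp : 'rV[R]_n)
  (Splus Sminus : set 'rV[R]_n) : Prop :=
  (forall s, Splus s -> ev Mp s = 1) /\ (forall s, Sminus s -> ev Mp s = 0).

From HB Require Import structures.
From mathcomp Require Import all_boot all_order all_algebra.
From mathcomp Require Import all_classical all_reals all_analysis.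
From mathcomp Require Import lra.
Set Implicit Arguments. Unset Strict Implicit.
Import Order.TTheory GRing.Theory Num.Theory.
Import numFieldNormedType.Exports.
Local Open Scope classical_set_scope.
Local Open Scope ring_scope.

(* Each M^(1)_x + M^(2)_y is a sum of two effects, so its norm is at most 2 and
   Pbar = 1 forces all four norms to equal 2.  By compactness each norm is
   attained, and value 2 at a state s means M^(1)_x(s) = M^(2)_y(s) = 1; the
   four states so obtained, one per pair (x, y), are the required ones.
   Conversely such states witness the four norms 2. *)

Lemma evD (R : realType) n (f g s : 'rV[R]_n) : ev (f + g) s = ev f s + ev g s.
Proof. by rewrite /ev -big_split; apply: eq_bigr => i _; rewrite !mxE mulrDl. Qed.

Lemma ev_continuous (R : realType) n (f : 'rV[R]_n) : continuous (ev f).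
Proof.
apply: (@continuous_big R^o 'I_n +%R 0 xpredT (@add_continuous R^o)) => i _.
move=> v; apply: (@continuous_comp _ _ _ (fun w : 'rV[R]_n => w 0 i) ( *%R (f 0 i))).
  exact: coord_continuous.
exact: mulrl_continuous.
Qed.

Lemma dichotomic_minus_eq1 (R : realType) n (S : set 'rV[R]_n) (u Mp Mm s : 'rV[R]_n) :
  state_space S u -> dichotomic S u Mp Mm -> S s -> ev Mm s = 1 <-> ev Mp s = 0.
Proof.
move=> [_ _ _ hu _] [_ _ hM] Ss.
have : ev Mp s + ev Mm s = 1 by rewrite -evD hM hu.
by split; lra.
Qed.

Section SumOfEffects.
Variables (R : realType) (n : nat) (S : set 'rV[R]_n) (e f : 'rV[R]_n).
Hypotheses (he : effect S e) (hf : effect S f).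

Lemma ev_add_effects_bounds s : S s -> 0 <= ev (e + f) s <= 2.
Proof.
move=> Ss; rewrite evD.
by move: (he Ss) (hf Ss) => /andP[? ?] /andP[? ?]; apply/andP; split; lra.
Qed.

Lemma ev_add_effects_le_fnorm s : S s -> ev (e + f) s <= fnorm S (e + f).
Proof.
move=> Ss; have /andP[ge0 _] := ev_add_effects_bounds Ss.
rewrite -(ger0_norm ge0); apply: ub_le_sup; last by exists s.
exists 2 => _ [t St <-]; have /andP[? ?] := ev_add_effects_bounds St.
by rewrite ger0_norm.
Qed.

Lemma fnorm_add_effects_le2 : S !=set0 -> fnorm S (e + f) <= 2.
Proof.
move=> [s0 Ss0]; apply: ge_sup; first by exists `|ev (e + f) s0|, s0.
move=> _ [s Ss <-]; have /andP[? ?] := ev_add_effects_bounds Ss.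
by rewrite ger0_norm.
Qed.

Lemma fnorm_add_effects_eq2 : S !=set0 -> compact S ->
  fnorm S (e + f) = 2 <-> exists2 s, S s & ev e s = 1 /\ ev f s = 1.
Proof.
move=> S0 cS; have le2 := fnorm_add_effects_le2 S0; split.
  have [c /set_mem Sc cmax] :=
    EVT_max_rV S0 cS (continuous_subspaceT (@ev_continuous _ _ (e + f))).
  have fnorm_le : fnorm S (e + f) <= ev (e + f) c.
    apply: ge_sup; first by case: S0 => s0 Ss0; exists `|ev (e + f) s0|, s0.
    move=> _ [s Ss <-]; have /andP[? _] := ev_add_effects_bounds Ss.
    by rewrite ger0_norm //; apply: cmax; rewrite inE.
  move=> eq2; exists c => //; move: fnorm_le; rewrite eq2 evD.
  by move: (he Sc) (hf Sc) => /andP[? ?] /andP[? ?]; split; lra.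
move=> [s Ss [es fs]]; have := ev_add_effects_le_fnorm Ss.
by rewrite evD es fs; lra.
Qed.

End SumOfEffects.

Lemma Pbar_eq1 (R : realType) n (S : set 'rV[R]_n) (u M1p M1m M2p M2m : 'rV[R]_n) :
  state_space S u -> dichotomic S u M1p M1m -> dichotomic S u M2p M2m ->
  Pbar S M1p M1m M2p M2m = 1 <->
  [/\ fnorm S (M1p + M2p) = 2, fnorm S (M1p + M2m) = 2,
      fnorm S (M1m + M2p) = 2 & fnorm S (M1m + M2m) = 2].
Proof.
move=> [S0 _ _ _ _] [e1p e1m _] [e2p e2m _].
have := fnorm_add_effects_le2 e1p e2p S0; have := fnorm_add_effects_le2 e1p e2m S0.
have := fnorm_add_effects_le2 e1m e2p S0; have := fnorm_add_effects_le2 e1m e2m S0.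
by rewrite /Pbar; split; [move=> ?; split; lra | case=> -> -> -> ->; lra].
Qed.

Lemma discriminates2 (R : realType) n (Mp a b c d : 'rV[R]_n) :
  discriminates Mp [set a; b] [set c; d] <->
  [/\ ev Mp a = 1, ev Mp b = 1, ev Mp c = 0 & ev Mp d = 0].
Proof.
split; first by case=> h1 h0; split; [apply: h1; left | apply: h1; right
                                     | apply: h0; left | apply: h0; right].
by case=> a1 b1 c0 d0; split=> s /= [] ->.
Qed.

Theorem proposition6 (R : realType) (n : nat) (S : set 'rV[R]_n) (u : 'rV[R]_n)
  (M1p M1m M2p M2m : 'rV[R]_n) :
  state_space S u ->
  dichotomic S u M1p M1m ->
  dichotomic S u M2p M2m ->
  (Pbar S M1p M1m M2p M2m = 1 <->
   exists s1 s2 s3 s4 : 'rV[R]_n,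
     [/\ S s1, S s2, S s3 & S s4] /\
     discriminates M1p [set s1; s2] [set s3; s4] /\
     discriminates M2p [set s1; s4] [set s2; s3]).
Proof.
move=> hS hM1 hM2; rewrite (Pbar_eq1 hS hM1 hM2).
have [S0 cS _ _ _] := hS; have [e1p e1m _] := hM1; have [e2p e2m _] := hM2.
have norm2P e f (he : effect S e) (hf : effect S f) := fnorm_add_effects_eq2 he hf S0 cS.
have minus1 s := @dichotomic_minus_eq1 _ _ _ _ _ _ s hS hM1.
have minus2 s := @dichotomic_minus_eq1 _ _ _ _ _ _ s hS hM2.
split.
- case=> /(norm2P _ _ e1p e2p) [s1 S1 [p11 p21]] /(norm2P _ _ e1p e2m) [s2 S2 [p12 m22]]
          /(norm2P _ _ e1m e2p) [s4 S4 [m14 p24]] /(norm2P _ _ e1m e2m) [s3 S3 [m13 m23]].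
  exists s1, s2, s3, s4; split=> //; split; apply/discriminates2; split=> //.
  + exact/(minus1 _ S3).
  + exact/(minus1 _ S4).
  + exact/(minus2 _ S2).
  + exact/(minus2 _ S3).
- case=> [s1 [s2 [s3 [s4 [[S1 S2 S3 S4] [/discriminates2 [p11 p12 p13 p14]
                                          /discriminates2 [p21 p24 p22 p23]]]]]]].
  split.
  + by apply/(norm2P _ _ e1p e2p); exists s1.
  + by apply/(norm2P _ _ e1p e2m); exists s2 => //; split=> //; apply/(minus2 _ S2).
  + by apply/(norm2P _ _ e1m e2p); exists s4 => //; split=> //; apply/(minus1 _ S4).
  + by apply/(norm2P _ _ e1m e2m); exists s3 => //; split; [apply/(minus1 _ S3) | apply/(minus2 _ S3)].
Qed.
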